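(* Every Young subgroup $\mathrm{Sym}(\lambda)\leq\mathrm{Sym}(n)$, with its natural action on $\{1,\dots,n\}$, has the EKR property.
   Context: For a partition $\lambda=[\lambda_1,\dots,\lambda_k]$ of $n$, let $\Omega_i=\{\lambda_1+\cdots+\lambda_{i-1}+1,\dots,\lambda_1+\cdots+\lambda_i\}$; the Young subgroup $\mathrm{Sym}(\lambda)$ is the subgroup $\mathrm{Sym}(\Omega_1)\cdots\mathrm{Sym}(\Omega_k)$ of permutations preserving each $\Omega_i$. Two permutations $\pi,\tau$ intersect if $\pi\tau^{-1}$ has a fixed point; a subset is intersecting if every pair intersects; a group has the EKR property if every intersecting subset has size at most the size of the largest point-stabilizer. *)

From mathcomp Require Import all_boot all_fingroup.
Set Implicit Arguments. Unset Strict Implicit. Unset Printing Implicit Defensive.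
Import GroupScope.

Definition is_partition (n : nat) (lam : seq nat) : bool :=
  [&& sumn lam == n, sorted geq lam & all (fun k => 0 < k) lam].

(* Omega_i = {lam_1+...+lam_{i-1}+1, ..., lam_1+...+lam_i}, 0-indexed:
   points x : 'I_n with sumn (take i lam) <= x < sumn (take i.+1 lam). *)
Definition Omega (n : nat) (lam : seq nat) (i : nat) : {set 'I_n} :=
  [set x : 'I_n | sumn (take i lam) <= x < sumn (take i.+1 lam)].

Definition young (n : nat) (lam : seq nat) : {set 'S_n} :=
  [set s : 'S_n | [forall i : 'I_(size lam), forall x : 'I_n,
       (s x \in Omega n lam i) == (x \in Omega n lam i)]].

Definition stab (n : nat) (G : {set 'S_n}) (x : 'I_n) : {set 'S_n} :=
  [set g in G | g x == x].

Definition perm_intersect (n : nat) (p t : 'S_n) : Prop :=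
  exists x : 'I_n, (p * t^-1) x = x.

Definition intersecting (n : nat) (S : {set 'S_n}) : Prop :=
  forall p t, p \in S -> t \in S -> p != t -> perm_intersect p t.

Definition EKR (n : nat) (G : {set 'S_n}) : Prop :=
  forall S : {set 'S_n}, S \subset G -> intersecting S ->
    #|S| <= \max_(x : 'I_n) #|stab G x|.

From mathcomp Require Import all_boot all_fingroup zify.

Set Implicit Arguments.
Unset Strict Implicit.
Unset Printing Implicit Defensive.

(* Let x be the first point of a smallest block, of size m, and let c rotate
   every block cyclically.  The powers c^0, ..., c^(m-1) lie in Sym(lam), map x
   onto its whole orbit (its block), and no two of them agree at any point,
   because c^d is fixed-point-free for 0 < d < m.  Writing s x = c^j(s) x, the
   map s |-> s c^-j(s) sends Sym(lam) into the stabilizer of x, and it is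
   injective on an intersecting family: two preimages of the same element
   differ by a power of c, which must fix the point where they agree. *)

(* First point and size of the block Omega_i containing x; junk value 0 when
   x >= sumn lam. *)
Fixpoint block_start (lam : seq nat) (x : nat) : nat :=
  if lam is l :: lam' then
    (if x < l then 0 else l + block_start lam' (x - l))
  else 0.

Fixpoint block_size (lam : seq nat) (x : nat) : nat :=
  if lam is l :: lam' then
    (if x < l then l else block_size lam' (x - l))
  else 0.

Definition in_block (lam : seq nat) (x y : nat) : bool :=
  block_start lam x <= y < block_start lam x + block_size lam x.

Lemma block_bounds lam x : x < sumn lam ->
  in_block lam x x /\ block_start lam x + block_size lam x <= sumn lam.
Proof.
rewrite /in_block; elim: lam x => [|l lam' IH] x //=.
case: ifP => x_l x_lt; first lia.
have [] := IH (x - l) ltac:(lia); lia.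
Qed.

Lemma in_block_same lam x y : x < sumn lam -> in_block lam x y ->
  block_start lam y = block_start lam x /\ block_size lam y = block_size lam x.
Proof.
rewrite /in_block; elim: lam x y => [|l lam' IH] x y //=.
case: ifP => x_l x_lt y_in; first by have -> : y < l by lia.
have -> : (y < l) = false by lia.
by have [-> ->] := IH (x - l) (y - l) ltac:(lia) ltac:(lia).
Qed.

Lemma block_Omega lam x : x < sumn lam -> exists2 i, i < size lam &
  sumn (take i lam) = block_start lam x /\
  sumn (take i.+1 lam) = block_start lam x + block_size lam x.
Proof.
elim: lam x => [|l lam' IH] x //=.
case: ifP => x_l x_lt.
  by exists 0; rewrite //= take0 /= addn0.
have [i lt_i [E1 E2]] := IH (x - l) ltac:(lia).
by exists i.+1; rewrite //= E1 E2 addnA.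
Qed.

Lemma in_block_Omega lam i x y : x < sumn lam -> in_block lam x y ->
  (sumn (take i lam) <= x < sumn (take i.+1 lam)) =
  (sumn (take i lam) <= y < sumn (take i.+1 lam)).
Proof.
rewrite /in_block; elim: lam i x y => [|l lam' IH] [|i] x y //=.
  case: ifP => x_l x_lt y_in; first lia.
  have [] := @block_bounds lam' (x - l) ltac:(lia).
  rewrite /in_block take0 /=; lia.
case: ifP => x_l x_lt y_in; first lia.
have := IH i (x - l) (y - l) ltac:(lia) ltac:(lia).
have [] := @block_bounds lam' (x - l) ltac:(lia); rewrite /in_block; lia.
Qed.

Definition block_rot (lam : seq nat) (x : nat) : nat :=
  block_start lam x + (x - block_start lam x).+1 %% block_size lam x.

Lemma iter_block_rot lam d x : x < sumn lam ->
  iter d (block_rot lam) x =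
  block_start lam x + (x - block_start lam x + d) %% block_size lam x.
Proof.
move=> x_lt; have [/andP[x_ge x_lt'] _] := block_bounds x_lt.
elim: d => [|d IH] /=; first by rewrite addn0 modn_small; lia.
have y_in : in_block lam x
  (block_start lam x + (x - block_start lam x + d) %% block_size lam x).
  by rewrite /in_block leq_addr ltn_add2l ltn_pmod //; lia.
rewrite IH /block_rot; have [-> ->] := in_block_same x_lt y_in.
by rewrite addKn -addn1 modnDml -addnA addn1.
Qed.

Lemma in_block_rot lam x : x < sumn lam -> in_block lam x (block_rot lam x).
Proof.
move=> x_lt; have [/andP[x_ge x_lt'] _] := block_bounds x_lt.
by rewrite /in_block /block_rot leq_addr ltn_add2l ltn_pmod //; lia.
Qed.

Lemma block_rot_inj lam x y : x < sumn lam -> y < sumn lam ->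
  block_rot lam x = block_rot lam y -> x = y.
Proof.
move=> x_lt y_lt E.
have [Sx Lx] := in_block_same x_lt (in_block_rot x_lt).
have [Sy Ly] := in_block_same y_lt (in_block_rot y_lt).
have [/andP[x_ge x_lt'] _] := block_bounds x_lt.
have [/andP[y_ge y_lt'] _] := block_bounds y_lt.
have ES : block_start lam x = block_start lam y by rewrite -Sx -Sy E.
have EL : block_size lam x = block_size lam y by rewrite -Lx -Ly E.
have : (x - block_start lam x) + 1 == (y - block_start lam x) + 1
         %[mod block_size lam x].
  by apply/eqP; move: E; rewrite /block_rot -ES -EL !addn1 => /addnI.
by rewrite eqn_modDr !modn_small; lia.
Qed.

Local Open Scope group_scope.

Lemma young_group_set n lam : group_set (young n lam).
Proof.
apply/group_setP; split.
  by rewrite inE; apply/forallP => i; apply/forallP => x; rewrite perm1.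
move=> s t; rewrite !inE => /forallP s_young /forallP t_young.
apply/forallP => i; apply/forallP => x; rewrite permM.
by move: (s_young i) (t_young i) => /forallP /(_ x) /eqP <- /forallP /(_ (s x)).
Qed.

Canonical young_group n lam := Group (young_group_set n lam).

Lemma perm_intersect_agree n (p t : 'S_n) :
  perm_intersect p t -> exists y, p y = t y.
Proof. by case=> y; rewrite permM => /(congr1 t); rewrite permKV; exists y. Qed.

Section StabilizerBound.
Variables (n : nat) (G : {group 'S_n}) (K : {set 'S_n}) (x : 'I_n).
Hypothesis sKG : K \subset G.
Hypothesis K_transitive :
  {in G, forall g : 'S_n, exists2 k, k \in K & k x = g x}.
Hypothesis K_sharp : {in K &, forall (k1 k2 : 'S_n) z, k1 z = k2 z -> k1 = k2}.

Lemma intersecting_card_le_stab (S : {set 'S_n}) :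
  S \subset G -> intersecting S -> #|S| <= #|stab G x|.
Proof.
move=> sSG S_int.
pose kof (g : 'S_n) : 'S_n := odflt 1 [pick k in K | k x == g x].
have kofP (g : 'S_n) : g \in G -> kof g \in K /\ kof g x = g x.
  move=> Gg; rewrite /kof; case: pickP => [k /andP[Kk /eqP //]|no_k].
  by have [k Kk kx] := K_transitive Gg; move: (no_k k); rewrite Kk kx eqxx.
pose f (g : 'S_n) : 'S_n := g * (kof g)^-1.
have f_inj : {in S &, injective f}.
  move=> s t Ss St fst; case: (eqVneq s t) => // s_t.
  have [y sy] := perm_intersect_agree (S_int s t Ss St s_t).
  have [Ks _] := kofP s (subsetP sSG s Ss).
  have [Kt _] := kofP t (subsetP sSG t St).
  have fy := congr1 (fun g : 'S_n => g y) fst; rewrite /f !permM sy in fy.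
  have kst : kof s = kof t.
    by apply: (K_sharp (z := (kof s)^-1 (t y)) Ks Kt); rewrite {2}fy !permKV.
  by move: fst; rewrite /f kst => /mulIg.
have f_stab s : s \in S -> f s \in stab G x.
  move=> Ss; have Gs := subsetP sSG s Ss; have [Ks kx] := kofP s Gs.
  by rewrite inE /f groupM ?groupV ?Gs ?(subsetP sKG _ Ks) //= permM -kx permK.
rewrite -(card_in_imset f_inj); apply: subset_leq_card.
by apply/subsetP => _ /imsetP[s Ss ->]; apply: f_stab.
Qed.

End StabilizerBound.

Section BlockCycle.
Variables (n : nat) (lam : seq nat).
Hypothesis lamE : sumn lam = n.

Lemma ord_lt_sumn (x : 'I_n) : x < sumn lam.
Proof. by rewrite lamE. Qed.

Definition block_rot_ord (x : 'I_n) : 'I_n := insubd x (block_rot lam x).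

Lemma val_block_rot_ord x : val (block_rot_ord x) = block_rot lam x.
Proof.
have x_lt := ord_lt_sumn x.
have [_ le_n] := block_bounds x_lt.
have /andP[_ rot_lt] := in_block_rot x_lt.
have rot_lt_n : block_rot lam x < n.
  by move: le_n; rewrite lamE; apply: leq_trans.
by rewrite val_insubd rot_lt_n.
Qed.

Lemma block_rot_ord_inj : injective block_rot_ord.
Proof.
move=> x y E; apply/val_inj/(@block_rot_inj lam); rewrite ?ord_lt_sumn //.
by rewrite -!val_block_rot_ord E.
Qed.

Definition block_cycle : 'S_n := perm block_rot_ord_inj.

Lemma block_cycleX d x : val ((block_cycle ^+ d) x) = iter d (block_rot lam) x.
Proof.
elim: d x => [|d IH] x; first by rewrite expg0 perm1.
by rewrite expgSr permM permE val_block_rot_ord IH.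
Qed.

Lemma block_cycle_young : block_cycle \in young n lam.
Proof.
rewrite inE; apply/forallP => i; apply/forallP => x; rewrite permE !inE.
have x_lt := ord_lt_sumn x.
by rewrite val_block_rot_ord -(in_block_Omega i x_lt (in_block_rot x_lt)).
Qed.

Lemma young_in_block (s : 'S_n) (x : 'I_n) :
  s \in young n lam -> in_block lam x (s x).
Proof.
have x_lt := ord_lt_sumn x.
have [i lt_i [E1 E2]] := block_Omega x_lt.
have [/andP[x_ge x_lt'] _] := block_bounds x_lt.
rewrite inE => /forallP /(_ (Ordinal lt_i)) /forallP /(_ x).
by rewrite !inE /= E1 E2 x_ge x_lt' => /eqP.
Qed.

Section SmallestBlock.
Variable x : 'I_n.
Hypothesis x_start : block_start lam x = x.
Hypothesis x_min : forall y : 'I_n, block_size lam x <= block_size lam y.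

Definition block_cycle_powers : {set 'S_n} :=
  [set block_cycle ^+ d | d : 'I_(block_size lam x)].

Lemma block_cycle_powers_young : block_cycle_powers \subset young n lam.
Proof.
by apply/subsetP => _ /imsetP[d _ ->]; rewrite groupX // block_cycle_young.
Qed.

Lemma block_cycle_powers_transitive :
  {in young n lam,
    forall g : 'S_n, exists2 k, k \in block_cycle_powers & k x = g x}.
Proof.
move=> g /(young_in_block x); rewrite /in_block x_start => /andP[ge_gx lt_gx].
have lt_d : g x - x < block_size lam x by rewrite ltn_subLR // addnC.
exists (block_cycle ^+ Ordinal lt_d); first exact: imset_f.
apply: val_inj; rewrite block_cycleX iter_block_rot ?ord_lt_sumn // x_start.
by rewrite subnn add0n modn_small //= subnKC.
Qed.

Lemma block_cycle_powers_sharp :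
  {in block_cycle_powers &, forall (k1 k2 : 'S_n) z, k1 z = k2 z -> k1 = k2}.
Proof.
move=> _ _ /imsetP[d1 _ ->] /imsetP[d2 _ ->] y /(congr1 val).
rewrite !block_cycleX !iter_block_rot ?ord_lt_sumn // => /addnI /eqP.
have lt_y (d : 'I_(block_size lam x)) : d < block_size lam y.
  exact: leq_trans (ltn_ord d) (x_min y).
by rewrite eqn_modDl !modn_small ?lt_y // => /eqP ->.
Qed.

End SmallestBlock.
End BlockCycle.

Theorem corollary20 (n : nat) (lam : seq nat) :
  0 < n -> is_partition n lam -> EKR (young n lam).
Proof.
move=> n_gt0 /and3P[/eqP lamE _ _] S sSY S_int.
have [x0 _ x0_min] := @arg_minnP _ (Ordinal n_gt0) xpredT (block_size lam) isT.
have x0_lt : x0 < sumn lam by rewrite lamE.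
have [/andP[start_le start_lt] _] := block_bounds x0_lt.
pose x : 'I_n := Ordinal (leq_ltn_trans start_le (ltn_ord x0)).
have [x_start x_size] :
    block_start lam x = x /\ block_size lam x = block_size lam x0.
  apply: (in_block_same (y := x) x0_lt).
  by rewrite /in_block leqnn (leq_ltn_trans start_le start_lt).
have x_min (y : 'I_n) : block_size lam x <= block_size lam y.
  by rewrite x_size x0_min.
apply: leq_trans (leq_bigmax x).
apply: (intersecting_card_le_stab (block_cycle_powers_young lamE x)) => //.
- exact: block_cycle_powers_transitive.
- exact: block_cycle_powers_sharp.
Qed.
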